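(* Let $n>1$ and let $t_1<\cdots<t_{n+1}$ be real nodes. Let $L=(\prod_{k=1}^{j-1}(t_i-t_k))_{1\le i,j\le n+1}$ be the collocation matrix of the Newton basis at these nodes and let $BD(L)=(b_{i,j})_{1\le i,j\le n+1}$ be the matrix with $b_{i,j}=0$ for $i<j$, $b_{i,i}=\prod_{k=1}^{i-1}(t_i-t_k)$, and $b_{i,j}=\prod_{k=1}^{j-1}\frac{t_i-t_{i-k}}{t_{i-1}-t_{i-k-1}}$ for $i>j$. Suppose the entries are computed in floating-point arithmetic with unit roundoff $u$, with $(4n-5)u<1$, by the following algorithms: Algorithm 1 (for $i>j$): for $i=2,\dots,n+1$, set $m_{i,1}:=1$ and for $j=2,\dots,i-1$ set $M:=\frac{t_i-t_{i-j+1}}{t_{i-1}-t_{i-j}}$ and $m_{i,j}:=m_{i,j-1}\cdot M$; then $b_{i,j}=m_{i,j}$. Algorithm 2 (for $i=j$): set $p_1:=1$; for $i=2,\dots,n+1$ set $p_i:=1$ and for $k=1,\dots,i-1$ set $p_i:=p_i\cdot(t_i-t_{i-k})$; then $b_{i,i}=p_i$. Let $\mathrm{fl}(b_{i,j})$ denote the computed values. Then $$\left|\frac{b_{i,j}-\mathrm{fl}(b_{i,j})}{b_{i,j}}\right|\le\gamma_{4n-5},\qquad 1\le j\le i\le n+1.$$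
   Context: Floating-point model: for elementary operations $\mathrm{op}\in\{+,-,\times,/\}$, $\mathrm{fl}(a\,\mathrm{op}\,b)=(a\,\mathrm{op}\,b)(1+\delta)^{\pm1}$ with $|\delta|\le u$. For $k\in\mathbb N$ with $ku<1$, $\gamma_k:=\frac{ku}{1-ku}$. *)

From Stdlib Require Import Reals Lra Lia.
Open Scope R_scope.

Definition gamma (u : R) (k : nat) : R := INR k * u / (1 - INR k * u).

Definition fp_model (u : R) (op fl : R -> R -> R) : Prop :=
  forall a b : R, exists d : R, Rabs d <= u /\
    (fl a b = op a b * (1 + d) \/ fl a b = op a b / (1 + d)).

Fixpoint prodR (f : nat -> R) (m : nat) : R :=
  match m with
  | O => 1
  | S m' => prodR f m' * f m
  end.

(* Exact entries b_{i,j} of BD(L), 1-based indices, nodes t 1 < ... < t (n+1). *)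
Definition bd_entry (t : nat -> R) (i j : nat) : R :=
  if Nat.ltb i j then 0
  else if Nat.eqb i j then prodR (fun k => t i - t k) (i - 1)
  else prodR (fun k => (t i - t (i - k)%nat) / (t (i - 1)%nat - t (i - k - 1)%nat)) (j - 1).

Fixpoint alg1 (fsub fmul fdiv : R -> R -> R) (t : nat -> R) (i j : nat) : R :=
  match j with
  | O => 1
  | S O => 1
  | S j' => fmul (alg1 fsub fmul fdiv t i j')
                 (fdiv (fsub (t i) (t (i - j')%nat))
                       (fsub (t (i - 1)%nat) (t (i - j' - 1)%nat)))
  end.

Fixpoint alg2_loop (fsub fmul : R -> R -> R) (t : nat -> R) (i k : nat) : R :=
  match k with
  | O => 1
  | S k' => fmul (alg2_loop fsub fmul t i k') (fsub (t i) (t (i - k)%nat))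
  end.

Definition alg2 (fsub fmul : R -> R -> R) (t : nat -> R) (i : nat) : R :=
  alg2_loop fsub fmul t i (i - 1).

Definition fl_bd (fsub fmul fdiv : R -> R -> R) (t : nat -> R) (i j : nat) : R :=
  if Nat.eqb i j then alg2 fsub fmul t i else alg1 fsub fmul fdiv t i j.

(* Every computed quantity is its exact value times a factor r with
   (1-u)^k <= r <= (1-u)^-k, where k counts the roundings it went through;
   such factors are closed under products and inverses with the counts
   adding up.  Each quotient M costs three roundings (two subtractions and a
   division), each accumulating multiplication one more, and the first
   multiplication (by 1) is exact.  Hence m_{i,j} carries 4(j-1)-1 <= 4n-5
   roundings and p_i carries 2(i-1)-1 <= 4n-5, and Bernoulli's inequality
   (1-u)^k >= 1-ku turns such a factor into the relative error bound
   gamma_k. *)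

From Stdlib Require Import Reals Lra Lia.
Open Scope R_scope.

Lemma fp_model_unit_ge0 (u : R) (op fl : R -> R -> R) :
  fp_model u op fl -> 0 <= u.
Proof.
  intros hfl; destruct (hfl 0 0) as [d [hd _]].
  pose proof (Rabs_pos d); lra.
Qed.

Lemma bernoulli_pow_1_sub (u : R) (k : nat) :
  0 <= u <= 1 -> 1 - INR k * u <= (1 - u) ^ k.
Proof.
  intros hu; induction k as [|k IH]; [simpl; lra|].
  rewrite S_INR; simpl pow.
  pose proof (pow_le (1 - u) k ltac:(lra)); pose proof (pos_INR k); nra.
Qed.

Lemma prodR_succ_l (f : nat -> R) (m : nat) :
  prodR f (S m) = f 1%nat * prodR (fun k => f (S k)) m.
Proof.
  induction m as [|m IH]; [simpl; ring|].
  change (prodR f (S m) * f (S (S m))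
          = f 1%nat * (prodR (fun k => f (S k)) m * f (S (S m)))).
  rewrite IH; ring.
Qed.

Lemma prodR_rev (f : nat -> R) (m : nat) :
  prodR f m = prodR (fun k => f (S m - k)%nat) m.
Proof.
  induction m as [|m IH]; [reflexivity|].
  rewrite (prodR_succ_l (fun k => f (S (S m) - k)%nat)).
  change (prodR f m * f (S m)
          = f (S (S m) - 1)%nat * prodR (fun k => f (S (S m) - S k)%nat) m).
  rewrite IH, Rmult_comm; replace (S (S m) - 1)%nat with (S m) by lia.
  reflexivity.
Qed.

Fixpoint fl_prod (fmul : R -> R -> R) (x : nat -> R) (m : nat) : R :=
  match m with
  | O => 1
  | S m' => fmul (fl_prod fmul x m') (x m)
  end.

Definition err_factor (u : R) (k : nat) (r : R) : Prop :=
  (1 - u) ^ k <= r <= / (1 - u) ^ k.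

Definition perturbed (u : R) (k : nat) (x y : R) : Prop :=
  exists r, err_factor u k r /\ x = y * r.

Section Roundings.

Variable u : R.
Hypothesis u_ge0 : 0 <= u.
Hypothesis u_lt1 : u < 1.

Let pow_1_sub_gt0 (k : nat) : 0 < (1 - u) ^ k.
Proof. apply pow_lt; lra. Qed.

Lemma err_factor_1 (k : nat) : err_factor u k 1.
Proof.
  pose proof (pow_1_sub_gt0 k).
  pose proof (pow_incr (1 - u) 1 k ltac:(lra)) as hle; rewrite pow1 in hle.
  split; [lra|].
  rewrite <- Rinv_1 at 1; apply Rinv_le_contravar; lra.
Qed.

Lemma err_factor_mul (a b : nat) (r s : R) :
  err_factor u a r -> err_factor u b s -> err_factor u (a + b) (r * s).
Proof.
  intros [hr1 hr2] [hs1 hs2]; unfold err_factor; rewrite pow_add, Rinv_mult.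
  pose proof (pow_1_sub_gt0 a); pose proof (pow_1_sub_gt0 b).
  split; apply Rmult_le_compat; lra.
Qed.

Lemma err_factor_inv (k : nat) (r : R) :
  err_factor u k r -> err_factor u k (/ r).
Proof.
  intros [hr1 hr2]; pose proof (pow_1_sub_gt0 k); split.
  - rewrite <- (Rinv_inv ((1 - u) ^ k)) at 1; apply Rinv_le_contravar; lra.
  - apply Rinv_le_contravar; lra.
Qed.

Lemma err_factor_1_add (d : R) : Rabs d <= u -> err_factor u 1 (1 + d).
Proof.
  intros hd; unfold err_factor; rewrite !pow_1.
  pose proof (Rle_abs d); pose proof (Rle_abs (- d)) as hneg.
  rewrite Rabs_Ropp in hneg.
  assert (1 + u <= / (1 - u)).
  { apply (Rmult_le_reg_r (1 - u)); [lra|].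
    rewrite Rinv_l by lra; nra. }
  lra.
Qed.

Lemma err_factor_gamma (k : nat) (r : R) :
  INR k * u < 1 -> err_factor u k r -> Rabs (1 - r) <= gamma u k.
Proof.
  intros hk [hr1 hr2].
  pose proof (bernoulli_pow_1_sub u k ltac:(lra)).
  pose proof (pos_INR k).
  assert (hku : 0 <= INR k * u) by nra.
  assert (hr_up : r * (1 - INR k * u) <= 1).
  { apply (Rmult_le_reg_r (/ (1 - INR k * u))); [apply Rinv_0_lt_compat; lra|].
    rewrite Rmult_assoc, Rinv_r, Rmult_1_r, Rmult_1_l by lra.
    apply (Rle_trans _ _ _ hr2), Rinv_le_contravar; lra. }
  assert (hg : gamma u k * (1 - INR k * u) = INR k * u)
    by (unfold gamma; field; lra).
  apply Rabs_le; split; nra.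
Qed.

Lemma perturbed_refl (x : R) : perturbed u 0 x x.
Proof. exists 1; split; [apply err_factor_1 | ring]. Qed.

Lemma perturbed_trans (a b : nat) (x y z : R) :
  perturbed u a x y -> perturbed u b y z -> perturbed u (a + b) x z.
Proof.
  intros [r [hr ->]] [s [hs ->]].
  exists (r * s); split; [apply err_factor_mul; assumption | ring].
Qed.

Lemma perturbed_le (a b : nat) (x y : R) :
  (a <= b)%nat -> perturbed u a x y -> perturbed u b x y.
Proof.
  intros hab [r [hr ->]]; exists (r * 1); split; [|ring].
  replace b with (a + (b - a))%nat by lia.
  apply err_factor_mul; [assumption | apply err_factor_1].
Qed.

Lemma perturbed_mul (a b : nat) (x x' y y' : R) :
  perturbed u a x x' -> perturbed u b y y' ->
  perturbed u (a + b) (x * y) (x' * y').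
Proof.
  intros [r [hr ->]] [s [hs ->]].
  exists (r * s); split; [apply err_factor_mul; assumption | ring].
Qed.

Lemma perturbed_div (a b : nat) (x x' y y' : R) :
  perturbed u a x x' -> perturbed u b y y' ->
  perturbed u (a + b) (x / y) (x' / y').
Proof.
  intros [r [hr ->]] [s [hs ->]].
  exists (r * / s); split.
  - apply err_factor_mul, err_factor_inv; assumption.
  - unfold Rdiv; rewrite Rinv_mult; ring.
Qed.

Lemma perturbed_round (op fl : R -> R -> R) (a b : R) :
  fp_model u op fl -> perturbed u 1 (fl a b) (op a b).
Proof.
  intros hfl; destruct (hfl a b) as [d [hd [-> | ->]]].
  - exists (1 + d); split; [apply err_factor_1_add; assumption | reflexivity].
  - exists (/ (1 + d)); split; [apply err_factor_inv, err_factor_1_add; assumption|].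
    reflexivity.
Qed.

Lemma perturbed_rel_err (k : nat) (x y : R) :
  INR k * u < 1 -> perturbed u k x y -> Rabs ((y - x) / y) <= gamma u k.
Proof.
  intros hk [r [hr ->]].
  destruct (Req_dec y 0) as [-> | hy].
  - (* [/ 0 = 0] makes the quotient vanish; hence the theorem never needs the
       ordering of the nodes *)
    unfold Rdiv; rewrite Rinv_0, Rmult_0_r, Rabs_R0.
    apply (Rle_trans _ (Rabs (1 - r))); [apply Rabs_pos|].
    apply err_factor_gamma; assumption.
  - replace ((y - y * r) / y) with (1 - r) by (field; assumption).
    apply err_factor_gamma; assumption.
Qed.

Section Algorithms.

Variables (fsub fmul fdiv : R -> R -> R) (t : nat -> R).
Hypothesis hsub : fp_model u Rminus fsub.
Hypothesis hmul : fp_model u Rmult fmul.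
Hypothesis hdiv : fp_model u Rdiv fdiv.
Hypothesis hmul1 : forall x : R, fmul 1 x = x.

Lemma fl_prod_perturbed (c : nat) (x y : nat -> R) :
  (forall k, perturbed u c (x k) (y k)) ->
  forall m, perturbed u ((c + 1) * m - 1) (fl_prod fmul x m) (prodR y m).
Proof.
  intros hxy m; induction m as [|m IH].
  - replace ((c + 1) * 0 - 1)%nat with 0%nat by lia; apply perturbed_refl.
  - destruct m as [|m].
    + simpl fl_prod; simpl prodR; rewrite hmul1, Rmult_1_l.
      replace ((c + 1) * 1 - 1)%nat with c by lia; apply hxy.
    + replace ((c + 1) * S (S m) - 1)%nat
        with (1 + (((c + 1) * S m - 1) + c))%nat by lia.
      eapply perturbed_trans; [apply perturbed_round, hmul|].
      apply perturbed_mul; [apply IH | apply hxy].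
Qed.

Lemma alg2_loop_fl_prod (i k : nat) :
  alg2_loop fsub fmul t i k = fl_prod fmul (fun k => fsub (t i) (t (i - k)%nat)) k.
Proof. induction k as [|k IH]; simpl; [reflexivity | rewrite IH; reflexivity]. Qed.

Lemma alg1_fl_prod (i m : nat) :
  alg1 fsub fmul fdiv t i (S m)
  = fl_prod fmul (fun k => fdiv (fsub (t i) (t (i - k)%nat))
                                (fsub (t (i - 1)%nat) (t (i - k - 1)%nat))) m.
Proof.
  induction m as [|m IH]; [reflexivity|].
  change (alg1 fsub fmul fdiv t i (S (S m))) with
    (fmul (alg1 fsub fmul fdiv t i (S m))
          (fdiv (fsub (t i) (t (i - S m)%nat))
                (fsub (t (i - 1)%nat) (t (i - S m - 1)%nat)))).
  rewrite IH; reflexivity.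
Qed.

Lemma fl_bd_diag_perturbed (i : nat) : (1 <= i)%nat ->
  perturbed u (2 * (i - 1) - 1) (fl_bd fsub fmul fdiv t i i) (bd_entry t i i).
Proof.
  intros hi.
  unfold fl_bd, bd_entry, alg2; rewrite Nat.ltb_irrefl, Nat.eqb_refl.
  rewrite alg2_loop_fl_prod, prodR_rev.
  replace (S (i - 1)) with i by lia.
  apply (fl_prod_perturbed 1); intros k.
  apply perturbed_round, hsub.
Qed.

Lemma fl_bd_lower_perturbed (i j : nat) : (1 <= j)%nat -> (j < i)%nat ->
  perturbed u (4 * (j - 1) - 1) (fl_bd fsub fmul fdiv t i j) (bd_entry t i j).
Proof.
  intros hj hji.
  unfold fl_bd, bd_entry.
  replace (Nat.ltb i j) with false by (symmetry; apply Nat.ltb_ge; lia).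
  replace (Nat.eqb i j) with false by (symmetry; apply Nat.eqb_neq; lia).
  destruct j as [|m]; [lia|].
  replace (S m - 1)%nat with m by lia.
  rewrite alg1_fl_prod.
  apply (fl_prod_perturbed 3); intros k.
  change 3%nat with (1 + (1 + 1))%nat.
  eapply perturbed_trans; [apply perturbed_round, hdiv|].
  apply perturbed_div; apply perturbed_round, hsub.
Qed.

End Algorithms.

End Roundings.

Theorem theorem3 (n : nat) (t : nat -> R) (u : R)
  (fsub fmul fdiv : R -> R -> R)
  (hn : (1 < n)%nat)
  (ht : forall i : nat, (1 <= i)%nat -> (i <= n)%nat -> t i < t (S i))
  (hsub : fp_model u Rminus fsub)
  (hmul : fp_model u Rmult fmul)
  (hdiv : fp_model u Rdiv fdiv)
  (hmul1 : forall x : R, fmul 1 x = x)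
  (hu : INR (4 * n - 5) * u < 1) :
  forall i j : nat, (1 <= j)%nat -> (j <= i)%nat -> (i <= n + 1)%nat ->
    Rabs ((bd_entry t i j - fl_bd fsub fmul fdiv t i j) / bd_entry t i j)
      <= gamma u (4 * n - 5).
Proof.
  intros i j hj hji hin.
  pose proof (fp_model_unit_ge0 u Rminus fsub hsub) as u_ge0.
  assert (u_lt1 : u < 1).
  { assert (1 <= INR (4 * n - 5)) by (apply (le_INR 1); lia). nra. }
  apply perturbed_rel_err; [assumption..|].
  destruct (Nat.eq_dec i j) as [<- | hij].
  - apply (perturbed_le u u_ge0 u_lt1 (2 * (i - 1) - 1)); [lia|].
    apply fl_bd_diag_perturbed; assumption.
  - apply (perturbed_le u u_ge0 u_lt1 (4 * (j - 1) - 1)); [lia|].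
    apply fl_bd_lower_perturbed; [assumption.. | lia].
Qed.
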